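(* In a double category, let $\eta$ be a cell with horizontal source $J\colon A\nrightarrow B$, vertical sides $d\colon A\to M$ and $l\colon B\to M$, and horizontal target $1_M$, that defines $l$ as the pointwise left Kan extension of $d$ along $J$. Let $f\colon C\to B$ be a vertical morphism whose conjoint $f^*\colon B\nrightarrow C$ exists, and let $\gamma\colon J(\mathrm{id},f)\Rightarrow J$ be a cartesian cell with vertical sides $\mathrm{id}_A$ and $f$ defining the restriction $J(\mathrm{id},f)\colon A\nrightarrow C$. Then the vertical composite $\eta\circ\gamma$ defines $l\circ f$ as the pointwise left Kan extension of $d$ along $J(\mathrm{id},f)$.
   Context: Double categories: a double category has objects, vertical morphisms (composition $\circ$), horizontal morphisms $J\colon A\nrightarrow B$ (composition $\odot$ in diagrammatic order, units $1_A$) and cells with horizontal source $J\colon A\nrightarrow B$, horizontal target $K\colon C\nrightarrow D$, vertical sides $f\colon A\to C$, $g\colon B\to D$. A cell $\phi\colon J\Rightarrow K$ with sides $f,g$ is cartesian if every cell $H\Rightarrow K$ with sides $f\circ h,g\circ k$ factors uniquely through $\phi$ via a cell $H\Rightarrow J$ with sides $h,k$; then $J=K(f,g)$ is the restriction. The conjoint of $f\colon C\to B$ is the restriction $f^*=1_B(\mathrm{id},f)\colon B\nrightarrow C$. Kan extensions: a cell $\eta$ with horizontal source $J\colon A\nrightarrow B$, vertical sides $d\colon A\to M$, $l\colon B\to M$ and target $1_M$ defines $l$ as the pointwise left Kan extension of $d$ along $J$ if for every $H\colon B\nrightarrow C$ (including $H=1_B$) every cell with horizontal source $J\odot H$, vertical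 sides $d$ and $k\colon C\to M$, target $1_M$ factors uniquely as $\eta\odot\psi$ with $\psi\colon H\Rightarrow 1_M$ having sides $l,k$. *)

(* A (pseudo) double category presented
   essentially-algebraically: vertical morphisms, horizontal morphisms and
   cells form plain types, equipped with boundary maps and total composition
   operations whose laws are required only on composable (well-typed) data.
   This avoids dependent-type transports for cell equalities. *)

Record DoubleCategory := {
  Ob : Type;
  VM : Type;
  HM : Type;
  Cell : Type;

  vdom : VM -> Ob;
  vcod : VM -> Ob;
  vid : Ob -> VM;
  vcomp : VM -> VM -> VM;            (* vcomp g f = g o f *)
  vdom_id : forall A, vdom (vid A) = A;
  vcod_id : forall A, vcod (vid A) = A;
  vdom_comp : forall f g, vcod f = vdom g -> vdom (vcomp g f) = vdom f;
  vcod_comp : forall f g, vcod f = vdom g -> vcod (vcomp g f) = vcod g;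
  vcomp_id_l : forall f, vcomp (vid (vcod f)) f = f;
  vcomp_id_r : forall f, vcomp f (vid (vdom f)) = f;
  vcomp_assoc : forall f g h, vcod f = vdom g -> vcod g = vdom h ->
      vcomp h (vcomp g f) = vcomp (vcomp h g) f;

  (* horizontal morphisms J : hs J -|-> ht J, composition in diagrammatic order *)
  hs : HM -> Ob;
  ht : HM -> Ob;
  hunit : Ob -> HM;
  hcomp : HM -> HM -> HM;
  hs_unit : forall A, hs (hunit A) = A;
  ht_unit : forall A, ht (hunit A) = A;
  hs_comp : forall J K, ht J = hs K -> hs (hcomp J K) = hs J;
  ht_comp : forall J K, ht J = hs K -> ht (hcomp J K) = ht K;

  (* cells: horizontal source ctop, horizontal target cbot,
     vertical sides cl (left) and cr (right) *)
  ctop : Cell -> HM;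
  cbot : Cell -> HM;
  cl : Cell -> VM;
  cr : Cell -> VM;
  bnd_tl : forall a, vdom (cl a) = hs (ctop a);
  bnd_tr : forall a, vdom (cr a) = ht (ctop a);
  bnd_bl : forall a, vcod (cl a) = hs (cbot a);
  bnd_br : forall a, vcod (cr a) = ht (cbot a);

  (* vertical composition of cells: cvc a b = b o a (a on top of b) *)
  cvc : Cell -> Cell -> Cell;
  ctop_cvc : forall a b, cbot a = ctop b -> ctop (cvc a b) = ctop a;
  cbot_cvc : forall a b, cbot a = ctop b -> cbot (cvc a b) = cbot b;
  cl_cvc : forall a b, cbot a = ctop b -> cl (cvc a b) = vcomp (cl b) (cl a);
  cr_cvc : forall a b, cbot a = ctop b -> cr (cvc a b) = vcomp (cr b) (cr a);
  cid : HM -> Cell;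
  ctop_cid : forall J, ctop (cid J) = J;
  cbot_cid : forall J, cbot (cid J) = J;
  cl_cid : forall J, cl (cid J) = vid (hs J);
  cr_cid : forall J, cr (cid J) = vid (ht J);
  cvc_id_l : forall a, cvc (cid (ctop a)) a = a;
  cvc_id_r : forall a, cvc a (cid (cbot a)) = a;
  cvc_assoc : forall a b c, cbot a = ctop b -> cbot b = ctop c ->
      cvc a (cvc b c) = cvc (cvc a b) c;

  chc : Cell -> Cell -> Cell;
  ctop_chc : forall a b, cr a = cl b -> ctop (chc a b) = hcomp (ctop a) (ctop b);
  cbot_chc : forall a b, cr a = cl b -> cbot (chc a b) = hcomp (cbot a) (cbot b);
  cl_chc : forall a b, cr a = cl b -> cl (chc a b) = cl a;
  cr_chc : forall a b, cr a = cl b -> cr (chc a b) = cr b;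
  cu : VM -> Cell;
  ctop_cu : forall f, ctop (cu f) = hunit (vdom f);
  cbot_cu : forall f, cbot (cu f) = hunit (vcod f);
  cl_cu : forall f, cl (cu f) = f;
  cr_cu : forall f, cr (cu f) = f;
  chc_cid : forall J K, ht J = hs K -> chc (cid J) (cid K) = cid (hcomp J K);
  interchange : forall a b a' b', cbot a = ctop b -> cbot a' = ctop b' ->
      cr a = cl a' -> cr b = cl b' ->
      chc (cvc a b) (cvc a' b') = cvc (chc a a') (chc b b');
  cu_id : forall A, cu (vid A) = cid (hunit A);
  cu_comp : forall f g, vcod f = vdom g -> cu (vcomp g f) = cvc (cu f) (cu g);

  assoc : HM -> HM -> HM -> Cell;
  assoc_inv : HM -> HM -> HM -> Cell;
  ctop_assoc : forall J K L, ht J = hs K -> ht K = hs L ->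
      ctop (assoc J K L) = hcomp (hcomp J K) L;
  cbot_assoc : forall J K L, ht J = hs K -> ht K = hs L ->
      cbot (assoc J K L) = hcomp J (hcomp K L);
  cl_assoc : forall J K L, cl (assoc J K L) = vid (hs J);
  cr_assoc : forall J K L, cr (assoc J K L) = vid (ht L);
  ctop_assoc_inv : forall J K L, ht J = hs K -> ht K = hs L ->
      ctop (assoc_inv J K L) = hcomp J (hcomp K L);
  cbot_assoc_inv : forall J K L, ht J = hs K -> ht K = hs L ->
      cbot (assoc_inv J K L) = hcomp (hcomp J K) L;
  cl_assoc_inv : forall J K L, cl (assoc_inv J K L) = vid (hs J);
  cr_assoc_inv : forall J K L, cr (assoc_inv J K L) = vid (ht L);
  assoc_iso1 : forall J K L, ht J = hs K -> ht K = hs L ->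
      cvc (assoc J K L) (assoc_inv J K L) = cid (hcomp (hcomp J K) L);
  assoc_iso2 : forall J K L, ht J = hs K -> ht K = hs L ->
      cvc (assoc_inv J K L) (assoc J K L) = cid (hcomp J (hcomp K L));
  assoc_nat : forall a b c, cr a = cl b -> cr b = cl c ->
      cvc (chc (chc a b) c) (assoc (cbot a) (cbot b) (cbot c))
      = cvc (assoc (ctop a) (ctop b) (ctop c)) (chc a (chc b c));

  lu : HM -> Cell;
  lu_inv : HM -> Cell;
  ctop_lu : forall J, ctop (lu J) = hcomp (hunit (hs J)) J;
  cbot_lu : forall J, cbot (lu J) = J;
  cl_lu : forall J, cl (lu J) = vid (hs J);
  cr_lu : forall J, cr (lu J) = vid (ht J);
  ctop_lu_inv : forall J, ctop (lu_inv J) = J;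
  cbot_lu_inv : forall J, cbot (lu_inv J) = hcomp (hunit (hs J)) J;
  cl_lu_inv : forall J, cl (lu_inv J) = vid (hs J);
  cr_lu_inv : forall J, cr (lu_inv J) = vid (ht J);
  lu_iso1 : forall J, cvc (lu J) (lu_inv J) = cid (hcomp (hunit (hs J)) J);
  lu_iso2 : forall J, cvc (lu_inv J) (lu J) = cid J;
  lu_nat : forall a, cvc (chc (cu (cl a)) a) (lu (cbot a)) = cvc (lu (ctop a)) a;

  ru : HM -> Cell;
  ru_inv : HM -> Cell;
  ctop_ru : forall J, ctop (ru J) = hcomp J (hunit (ht J));
  cbot_ru : forall J, cbot (ru J) = J;
  cl_ru : forall J, cl (ru J) = vid (hs J);
  cr_ru : forall J, cr (ru J) = vid (ht J);
  ctop_ru_inv : forall J, ctop (ru_inv J) = J;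
  cbot_ru_inv : forall J, cbot (ru_inv J) = hcomp J (hunit (ht J));
  cl_ru_inv : forall J, cl (ru_inv J) = vid (hs J);
  cr_ru_inv : forall J, cr (ru_inv J) = vid (ht J);
  ru_iso1 : forall J, cvc (ru J) (ru_inv J) = cid (hcomp J (hunit (ht J)));
  ru_iso2 : forall J, cvc (ru_inv J) (ru J) = cid J;
  ru_nat : forall a, cvc (chc a (cu (cr a))) (ru (cbot a)) = cvc (ru (ctop a)) a;

  pentagon : forall J K L N, ht J = hs K -> ht K = hs L -> ht L = hs N ->
      cvc (assoc (hcomp J K) L N) (assoc J K (hcomp L N))
      = cvc (cvc (chc (assoc J K L) (cid N)) (assoc J (hcomp K L) N))
            (chc (cid J) (assoc K L N));
  triangle : forall J K, ht J = hs K ->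
      cvc (assoc J (hunit (ht J)) K) (chc (cid J) (lu K)) = chc (ru J) (cid K)
}.

Arguments vdom {_} _. Arguments vcod {_} _. Arguments vid {_} _.
Arguments vcomp {_} _ _. Arguments hs {_} _. Arguments ht {_} _.
Arguments hunit {_} _. Arguments hcomp {_} _ _.
Arguments ctop {_} _. Arguments cbot {_} _. Arguments cl {_} _. Arguments cr {_} _.
Arguments cvc {_} _ _. Arguments cid {_} _. Arguments chc {_} _ _.
Arguments cu {_} _. Arguments assoc {_} _ _ _. Arguments assoc_inv {_} _ _ _.
Arguments lu {_} _. Arguments lu_inv {_} _. Arguments ru {_} _. Arguments ru_inv {_} _.

Definition cartesian {D : DoubleCategory} (phi : Cell D) : Prop :=
  forall (H : HM D) (h k : VM D) (psi : Cell D),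
    vcod h = vdom (cl phi) -> vcod k = vdom (cr phi) ->
    ctop psi = H -> cbot psi = cbot phi ->
    cl psi = vcomp (cl phi) h -> cr psi = vcomp (cr phi) k ->
    exists! chi : Cell D,
      ctop chi = H /\ cbot chi = ctop phi /\ cl chi = h /\ cr chi = k /\
      cvc chi phi = psi.

(* The conjoint f^* = 1_B(id, f) : B -|-> C of f : C -> B exists:
   there is a cartesian cell f^* => 1_B with sides id_B and f. *)
Definition has_conjoint {D : DoubleCategory} (f : VM D) : Prop :=
  exists (fs : HM D) (c : Cell D),
    ctop c = fs /\ cbot c = hunit (vcod f) /\ cl c = vid (vcod f) /\
    cr c = f /\ cartesian c.

(* For H : B -|-> C, the horizontal composite
   eta (.) psi has target 1_M (.) 1_M, which is identified with 1_M via the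
   unitor lu (1_M) (= ru (1_M) by coherence). *)
Definition pw_lan {D : DoubleCategory} (eta : Cell D) (J : HM D)
    (d l : VM D) (M : Ob D) : Prop :=
  ctop eta = J /\ cbot eta = hunit M /\ cl eta = d /\ cr eta = l /\
  forall (H : HM D) (k : VM D) (phi : Cell D),
    hs H = ht J ->
    ctop phi = hcomp J H -> cbot phi = hunit M ->
    cl phi = d -> cr phi = k ->
    exists! psi : Cell D,
      ctop psi = H /\ cbot psi = hunit M /\ cl psi = l /\ cr psi = k /\
      phi = cvc (chc eta psi) (lu (hunit M)).


(* The conjoint f^* = F of f makes the restriction J(id, f) isomorphic to J (.) F:
   the comparison theta : J (.) F => J(id, f) comes from cartesianness of gamma,
   and the unit u : 1_C => F of the conjoint yields its inverse.  Cells
   H => 1_M with sides l o f, k correspond bijectively ("mates") to cells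
   F (.) H => 1_M with sides l, k, so the universal property of eta along J,
   applied to F (.) H, transports to the universal property of gamma ; eta
   along J(id, f). *)

Definition framed {D : DoubleCategory} (a : Cell D) (J K : HM D) (f g : VM D) :=
  ctop a = J /\ cbot a = K /\ cl a = f /\ cr a = g.

Lemma framed_congr {D} (a : Cell D) J K f g J' K' f' g' :
  framed a J K f g -> J = J' -> K = K' -> f = f' -> g = g' -> framed a J' K' f' g'.
Proof. intros H -> -> -> ->; exact H. Qed.

Lemma framed_cvc {D} (a b : Cell D) J K L f g f' g' :
  framed a J K f g -> framed b K L f' g' -> framed (cvc a b) J L (vcomp f' f) (vcomp g' g).
Proof.
  intros (a1&a2&a3&a4) (b1&b2&b3&b4).
  assert (E : cbot a = ctop b) by congruence.
  repeat split.
  - rewrite ctop_cvc; auto.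
  - rewrite cbot_cvc; auto.
  - rewrite cl_cvc; congruence.
  - rewrite cr_cvc; congruence.
Qed.

Lemma framed_chc {D} (a b : Cell D) J K f g J' K' g' :
  framed a J K f g -> framed b J' K' g g' -> framed (chc a b) (hcomp J J') (hcomp K K') f g'.
Proof.
  intros (a1&a2&a3&a4) (b1&b2&b3&b4).
  assert (E : cr a = cl b) by congruence.
  repeat split.
  - rewrite ctop_chc; congruence.
  - rewrite cbot_chc; congruence.
  - rewrite cl_chc; congruence.
  - rewrite cr_chc; congruence.
Qed.

Lemma framed_cid {D} (J : HM D) : framed (cid J) J J (vid (hs J)) (vid (ht J)).
Proof. repeat split; auto using ctop_cid, cbot_cid, cl_cid, cr_cid. Qed.

Lemma framed_cu {D} (f : VM D) : framed (cu f) (hunit (vdom f)) (hunit (vcod f)) f f.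
Proof. repeat split; auto using ctop_cu, cbot_cu, cl_cu, cr_cu. Qed.

Lemma framed_assoc {D} (J K L : HM D) : ht J = hs K -> ht K = hs L ->
  framed (assoc J K L) (hcomp (hcomp J K) L) (hcomp J (hcomp K L)) (vid (hs J)) (vid (ht L)).
Proof. intros; repeat split; auto using ctop_assoc, cbot_assoc, cl_assoc, cr_assoc. Qed.

Lemma framed_assoc_inv {D} (J K L : HM D) : ht J = hs K -> ht K = hs L ->
  framed (assoc_inv J K L) (hcomp J (hcomp K L)) (hcomp (hcomp J K) L) (vid (hs J)) (vid (ht L)).
Proof.
  intros; repeat split; auto using ctop_assoc_inv, cbot_assoc_inv, cl_assoc_inv, cr_assoc_inv.
Qed.

Lemma framed_lu {D} (J : HM D) : framed (lu J) (hcomp (hunit (hs J)) J) J (vid (hs J)) (vid (ht J)).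
Proof. repeat split; auto using ctop_lu, cbot_lu, cl_lu, cr_lu. Qed.

Lemma framed_lu_inv {D} (J : HM D) :
  framed (lu_inv J) J (hcomp (hunit (hs J)) J) (vid (hs J)) (vid (ht J)).
Proof. repeat split; auto using ctop_lu_inv, cbot_lu_inv, cl_lu_inv, cr_lu_inv. Qed.

Lemma framed_ru {D} (J : HM D) : framed (ru J) (hcomp J (hunit (ht J))) J (vid (hs J)) (vid (ht J)).
Proof. repeat split; auto using ctop_ru, cbot_ru, cl_ru, cr_ru. Qed.

Lemma framed_vdom_r {D} (a : Cell D) J K f g : framed a J K f g -> vdom g = ht J.
Proof. intros (<-&_&_&<-); apply bnd_tr. Qed.

Lemma framed_vcod_r {D} (a : Cell D) J K f g : framed a J K f g -> vcod g = ht K.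
Proof. intros (_&<-&_&<-); apply bnd_br. Qed.

Lemma vcomp_vid_l {D} (f : VM D) X : vcod f = X -> vcomp (vid X) f = f.
Proof. intros <-; apply vcomp_id_l. Qed.

Lemma vcomp_vid_r {D} (f : VM D) X : vdom f = X -> vcomp f (vid X) = f.
Proof. intros <-; apply vcomp_id_r. Qed.

Lemma cvc_cid_l {D} (a : Cell D) J : ctop a = J -> cvc (cid J) a = a.
Proof. intros <-; apply cvc_id_l. Qed.

Lemma cvc_cid_r {D} (a : Cell D) K : cbot a = K -> cvc a (cid K) = a.
Proof. intros <-; apply cvc_id_r. Qed.

Lemma lu_natural {D} (a : Cell D) f J K : cl a = f -> ctop a = J -> cbot a = K ->
  cvc (chc (cu f) a) (lu K) = cvc (lu J) a.
Proof. intros <- <- <-; apply lu_nat. Qed.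

Lemma ru_natural {D} (a : Cell D) f J K : cr a = f -> ctop a = J -> cbot a = K ->
  cvc (chc a (cu f)) (ru K) = cvc (ru J) a.
Proof. intros <- <- <-; apply ru_nat. Qed.

(* Boundary bookkeeping: [solve_obj] closes equations between objects and
   vertical morphisms, [solve_frame] computes the frame of a composite cell,
   and [solve_bnd] discharges the well-typedness side conditions of the
   equational laws. *)
Ltac solve_obj := first [reflexivity | congruence
  | progress rewrite ?vdom_id, ?vcod_id, ?hs_unit, ?ht_unit; solve_obj
  | rewrite hs_comp by solve_obj; solve_obj | rewrite ht_comp by solve_obj; solve_obj
  | rewrite vdom_comp by solve_obj; solve_obj | rewrite vcod_comp by solve_obj; solve_obj
  | rewrite vcomp_vid_l by solve_obj; solve_obj
  | rewrite vcomp_vid_r by solve_obj; solve_obj ].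

Ltac congr_frame tac :=
  eapply framed_congr; [tac | solve_obj | solve_obj | solve_obj | solve_obj].

Ltac solve_frame := match goal with
 | |- framed (cvc _ _) _ _ _ _ => congr_frame ltac:(eapply framed_cvc; solve_frame)
 | |- framed (chc _ _) _ _ _ _ => congr_frame ltac:(eapply framed_chc; solve_frame)
 | |- framed (cid _) _ _ _ _ => congr_frame ltac:(apply framed_cid)
 | |- framed (cu _) _ _ _ _ => congr_frame ltac:(apply framed_cu)
 | |- framed (lu _) _ _ _ _ => congr_frame ltac:(apply framed_lu)
 | |- framed (lu_inv _) _ _ _ _ => congr_frame ltac:(apply framed_lu_inv)
 | |- framed (ru _) _ _ _ _ => congr_frame ltac:(apply framed_ru)
 | |- framed (assoc _ _ _) _ _ _ _ => congr_frame ltac:(apply framed_assoc; solve_obj)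
 | |- framed (assoc_inv _ _ _) _ _ _ _ =>
     congr_frame ltac:(apply framed_assoc_inv; solve_obj)
 | H : framed ?a _ _ _ _ |- framed ?a _ _ _ _ => congr_frame ltac:(exact H)
 end.

Ltac solve_bnd := repeat match goal with
 | |- context [ctop ?x] => let H := fresh in eassert (H : framed x _ _ _ _) by solve_frame;
      destruct H as (H&_&_&_); rewrite H; clear H
 | |- context [cbot ?x] => let H := fresh in eassert (H : framed x _ _ _ _) by solve_frame;
      destruct H as (_&H&_&_); rewrite H; clear H
 | |- context [cl ?x] => let H := fresh in eassert (H : framed x _ _ _ _) by solve_frame;
      destruct H as (_&_&H&_); rewrite H; clear H
 | |- context [cr ?x] => let H := fresh in eassert (H : framed x _ _ _ _) by solve_frame;
      destruct H as (_&_&_&H); rewrite H; clear H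
 end; solve_obj.

Lemma assoc_inv_natural {D} (a b c : Cell D) Ja Ka fa ga Jb Kb gb Jc Kc gc :
  framed a Ja Ka fa ga -> framed b Jb Kb ga gb -> framed c Jc Kc gb gc ->
  cvc (chc a (chc b c)) (assoc_inv Ka Kb Kc) = cvc (assoc_inv Ja Jb Jc) (chc (chc a b) c).
Proof.
  intros ha hb hc.
  pose proof ha as (a1&a2&a3&a4). pose proof hb as (b1&b2&b3&b4).
  pose proof hc as (c1&c2&c3&c4).
  assert (e1 : ht Ja = hs Jb) by (rewrite <- a1, <- b1, <- bnd_tr, <- bnd_tl; congruence).
  assert (e2 : ht Jb = hs Jc) by (rewrite <- c1, <- b1, <- bnd_tr, <- bnd_tl; congruence).
  assert (e3 : ht Ka = hs Kb) by (rewrite <- a2, <- b2, <- bnd_br, <- bnd_bl; congruence).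
  assert (e4 : ht Kb = hs Kc) by (rewrite <- c2, <- b2, <- bnd_br, <- bnd_bl; congruence).
  pose proof (assoc_nat D a b c) as N.
  rewrite a4, b4, a1, b1, c1, a2, b2, c2 in N.
  specialize (N (eq_sym b3) (eq_sym c3)).
  symmetry.
  rewrite <- (cvc_cid_r (cvc (assoc_inv Ja Jb Jc) (chc (chc a b) c)) (hcomp (hcomp Ka Kb) Kc))
    by solve_bnd.
  rewrite <- (assoc_iso1 _ Ka Kb Kc) by solve_bnd.
  rewrite <- (cvc_assoc _ (assoc_inv Ja Jb Jc)), (cvc_assoc _ (chc (chc a b) c)), N
    by solve_bnd.
  rewrite <- (cvc_assoc _ (assoc Ja Jb Jc)), (cvc_assoc _ (assoc_inv Ja Jb Jc)), assoc_iso2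
    by solve_bnd.
  apply cvc_cid_l; solve_bnd.
Qed.

Lemma triangle_inv {D} (J K : HM D) : ht J = hs K ->
  cvc (assoc_inv J (hunit (ht J)) K) (chc (ru J) (cid K)) = chc (cid J) (lu K).
Proof.
  intros e. rewrite <- triangle by auto.
  rewrite (cvc_assoc _ (assoc_inv _ _ _)) by solve_bnd.
  rewrite assoc_iso2 by solve_bnd.
  apply cvc_cid_l; solve_bnd.
Qed.

Section Restriction.

Variables (D : DoubleCategory) (A B C M : Ob D) (J JR F : HM D) (d l f : VM D)
  (eta gamma c : Cell D).
Hypotheses (hs_J : hs J = A) (ht_J : ht J = B) (hs_JR : hs JR = A) (ht_JR : ht JR = C)
  (hs_F : hs F = B) (ht_F : ht F = C) (vdom_d : vdom d = A)
  (vdom_l : vdom l = B) (vcod_l : vcod l = M) (vdom_f : vdom f = C) (vcod_f : vcod f = B).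
Hypotheses (frame_eta : framed eta J (hunit M) d l)
  (frame_gamma : framed gamma JR J (vid A) f) (frame_c : framed c F (hunit B) (vid B) f).
Hypotheses (cart_gamma : cartesian gamma) (cart_c : cartesian c).

Lemma conjoint_unit : exists u, framed u (hunit C) F f (vid C) /\ cvc u c = cu f.
Proof.
  destruct (cart_c (hunit C) f (vid C) (cu f)) as [u [[u1 [u2 [u3 [u4 uc]]]] _]];
    try solve_bnd.
  exists u; split; [repeat split; auto; rewrite u2; solve_bnd | exact uc].
Qed.

Lemma restriction_comparison : exists th,
  framed th (hcomp J F) JR (vid A) (vid C) /\ cvc th gamma = cvc (chc (cid J) c) (ru J).
Proof.
  destruct (cart_gamma (hcomp J F) (vid A) (vid C) (cvc (chc (cid J) c) (ru J)))
    as [th [[t1 [t2 [t3 [t4 tg]]]] _]]; try solve_bnd.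
  exists th; split; [repeat split; auto; rewrite t2; solve_bnd | exact tg].
Qed.

Variables (u th : Cell D).
Hypotheses (frame_u : framed u (hunit C) F f (vid C)) (u_c : cvc u c = cu f)
  (frame_th : framed th (hcomp J F) JR (vid A) (vid C))
  (th_gamma : cvc th gamma = cvc (chc (cid J) c) (ru J)).

(* Followed by gamma, both sides equal [ru JR] followed by gamma, so they agree
   by cartesianness of gamma. *)
Lemma comparison_retraction : cvc (chc gamma u) th = ru JR.
Proof.
  destruct (cart_gamma (hcomp JR (hunit C)) (vid A) (vid C) (cvc (ru JR) gamma))
    as [x [_ x_unique]]; try solve_bnd.
  transitivity x; [symmetry|]; apply x_unique; repeat split; try solve_bnd.
  rewrite <- cvc_assoc, th_gamma, cvc_assoc, <- interchange, u_c, cvc_cid_r by solve_bnd.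
  apply ru_natural; solve_bnd.
Qed.

Definition unit_whisker (H : HM D) : Cell D := cvc (lu_inv H) (chc u (cid H)).

Definition comparison_whisker (H : HM D) : Cell D := cvc (assoc_inv J F H) (chc th (cid H)).

Lemma framed_unit_whisker H : hs H = C -> framed (unit_whisker H) H (hcomp F H) f (vid (ht H)).
Proof. intros; unfold unit_whisker; solve_frame. Qed.

Lemma framed_comparison_whisker H : hs H = C ->
  framed (comparison_whisker H) (hcomp J (hcomp F H)) (hcomp JR H) (vid A) (vid (ht H)).
Proof. intros; unfold comparison_whisker; solve_frame. Qed.

Lemma comparison_whisker_section H : hs H = C ->
  cvc (chc gamma (unit_whisker H)) (comparison_whisker H) = cid (hcomp JR H).
Proof.
  intros hH. pose proof (framed_unit_whisker H hH) as frame_P.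
  assert (E1 : chc gamma (unit_whisker H)
               = cvc (chc (cid JR) (lu_inv H)) (chc gamma (chc u (cid H)))).
  { unfold unit_whisker; rewrite <- interchange, cvc_cid_l by solve_bnd; reflexivity. }
  assert (E2 : cvc (chc gamma (chc u (cid H))) (assoc_inv J F H)
               = cvc (assoc_inv JR (hunit C) H) (chc (chc gamma u) (cid H))).
  { eapply assoc_inv_natural; solve_frame. }
  assert (E3 : cvc (chc (chc gamma u) (cid H)) (chc th (cid H)) = chc (ru JR) (cid H)).
  { rewrite <- interchange, comparison_retraction, cvc_cid_r by solve_bnd; reflexivity. }
  pose proof (triangle_inv JR H) as T. rewrite ht_JR in T. specialize (T (eq_sym hH)).
  unfold comparison_whisker. rewrite cvc_assoc, E1 by solve_bnd.
  rewrite <- (cvc_assoc _ (chc (cid JR) (lu_inv H))), E2 by solve_bnd.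
  rewrite <- (cvc_assoc _ (chc (cid JR) (lu_inv H))),
    <- (cvc_assoc _ (assoc_inv JR (hunit C) H)), E3, T by solve_bnd.
  rewrite <- interchange, lu_iso2, cvc_cid_l by solve_bnd.
  apply chc_cid; solve_bnd.
Qed.

Definition conjoint_mate (psi : Cell D) : Cell D :=
  cvc (chc (cvc c (cu l)) psi) (lu (hunit M)).

Lemma framed_conjoint_mate H k psi : hs H = C -> framed psi H (hunit M) (vcomp l f) k ->
  framed (conjoint_mate psi) (hcomp F H) (hunit M) l k.
Proof.
  intros hH frame_psi.
  pose proof (framed_vcod_r _ _ _ _ _ frame_psi) as vcod_k; rewrite ht_unit in vcod_k.
  unfold conjoint_mate; solve_frame.
Qed.

Lemma unit_whisker_mate H k psi : hs H = C -> framed psi H (hunit M) (vcomp l f) k ->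
  cvc (unit_whisker H) (conjoint_mate psi) = psi.
Proof.
  intros hH frame_psi.
  pose proof (framed_vcod_r _ _ _ _ _ frame_psi) as vcod_k; rewrite ht_unit in vcod_k.
  unfold unit_whisker, conjoint_mate.
  rewrite <- (cvc_assoc _ (lu_inv H)), (cvc_assoc _ (chc u (cid H))) by solve_bnd.
  rewrite <- interchange, (cvc_assoc _ u), u_c, <- cu_comp, cvc_cid_l by solve_bnd.
  rewrite (lu_natural psi (vcomp l f) H (hunit M)), (cvc_assoc _ (lu_inv H)), lu_iso2
    by solve_bnd.
  apply cvc_cid_l; solve_bnd.
Qed.

Lemma conjoint_mate_pasting H k psi : hs H = C -> framed psi H (hunit M) (vcomp l f) k ->
  cvc (comparison_whisker H) (cvc (chc (cvc gamma eta) psi) (lu (hunit M)))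
  = cvc (chc eta (conjoint_mate psi)) (lu (hunit M)).
Proof.
  intros hH frame_psi.
  pose proof (framed_vcod_r _ _ _ _ _ frame_psi) as vcod_k; rewrite ht_unit in vcod_k.
  set (Y := cvc c (cu l)).
  assert (frame_Y : framed Y F (hunit M) l (vcomp l f)) by (unfold Y; solve_frame).
  assert (E : cvc (chc th (cid H)) (chc (cvc gamma eta) psi)
              = chc (cvc (chc eta Y) (ru (hunit M))) psi).
  { rewrite <- interchange, cvc_cid_l, (cvc_assoc _ th), th_gamma by solve_bnd.
    rewrite <- (cvc_assoc _ (chc (cid J) c)), <- (ru_natural eta l J (hunit M)) by solve_bnd.
    rewrite (cvc_assoc _ (chc (cid J) c)), <- interchange, cvc_cid_l by solve_bnd.
    reflexivity. }
  assert (E' : chc (cvc (chc eta Y) (ru (hunit M))) psi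
               = cvc (chc (chc eta Y) psi) (chc (ru (hunit M)) (cid (hunit M)))).
  { rewrite <- interchange, cvc_cid_r by solve_bnd; reflexivity. }
  pose proof (triangle_inv (hunit M) (hunit M)) as T. rewrite ht_unit in T.
  specialize (T (eq_sym (hs_unit _ M))).
  unfold comparison_whisker, conjoint_mate; fold Y.
  rewrite <- !(cvc_assoc _ (assoc_inv J F H)), (cvc_assoc _ (chc th (cid H))), E, E'
    by solve_bnd.
  rewrite <- (cvc_assoc _ (chc (chc eta Y) psi)), (cvc_assoc _ (assoc_inv J F H)) by solve_bnd.
  rewrite <- (assoc_inv_natural eta Y psi J (hunit M) d l F (hunit M) (vcomp l f) H (hunit M) k)
    by solve_frame.
  rewrite <- (cvc_assoc _ (chc eta (chc Y psi))),
    (cvc_assoc _ (assoc_inv (hunit M) (hunit M) (hunit M))), T by solve_bnd.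
  rewrite (cvc_assoc _ (chc eta (chc Y psi))), <- interchange, cvc_cid_r by solve_bnd.
  reflexivity.
Qed.

Lemma pw_lan_restriction : pw_lan eta J d l M -> pw_lan (cvc gamma eta) JR d (vcomp l f) M.
Proof.
  intros (_&_&_&_&eta_universal).
  split; [solve_bnd|]. split; [solve_bnd|]. split; [solve_bnd|]. split; [solve_bnd|].
  intros H k phi hH p1 p2 p3 p4. rewrite ht_JR in hH.
  assert (frame_phi : framed phi (hcomp JR H) (hunit M) d k) by (repeat split; auto).
  pose proof (framed_vcod_r _ _ _ _ _ frame_phi) as vcod_k; rewrite ht_unit in vcod_k.
  assert (vdom_k : vdom k = ht H) by (rewrite (framed_vdom_r _ _ _ _ _ frame_phi); solve_obj).
  pose proof (framed_unit_whisker H hH) as frame_P.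
  pose proof (framed_comparison_whisker H hH) as frame_W.
  destruct (eta_universal (hcomp F H) k (cvc (comparison_whisker H) phi))
    as [psi' [[q1 [q2 [q3 [q4 q_eq]]]] psi'_unique]]; try solve_bnd.
  assert (frame_psi' : framed psi' (hcomp F H) (hunit M) l k) by (repeat split; auto).
  exists (cvc (unit_whisker H) psi'). split.
  - repeat split; try solve_bnd.
    rewrite interchange, <- cvc_assoc, <- q_eq, cvc_assoc, comparison_whisker_section
      by solve_bnd.
    symmetry; apply cvc_cid_l; solve_bnd.
  - intros psi (r1&r2&r3&r4&r_eq).
    assert (frame_psi : framed psi H (hunit M) (vcomp l f) k) by (repeat split; auto).
    pose proof (framed_conjoint_mate H k psi hH frame_psi) as frame_mate.
    rewrite <- (unit_whisker_mate H k psi) by auto.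
    f_equal; apply psi'_unique.
    repeat split; try solve_bnd.
    rewrite r_eq; apply (conjoint_mate_pasting H k); auto.
Qed.

End Restriction.

Theorem lemma4p4 (D : DoubleCategory) (A B C M : Ob D)
    (J JR : HM D) (d l f : VM D) (eta gamma : Cell D) :
    hs J = A -> ht J = B ->
    vdom d = A -> vcod d = M -> vdom l = B -> vcod l = M ->
    vdom f = C -> vcod f = B ->
    pw_lan eta J d l M ->
    has_conjoint f ->
    ctop gamma = JR -> cbot gamma = J -> cl gamma = vid A -> cr gamma = f ->
    cartesian gamma ->
    pw_lan (cvc gamma eta) JR d (vcomp l f) M.
Proof.
  intros hs_J ht_J vdom_d _ vdom_l vcod_l vdom_f vcod_f lan_eta
    (F & c & c1 & c2 & c3 & c4 & cart_c) g1 g2 g3 g4 cart_gamma.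
  pose proof lan_eta as (e1 & e2 & e3 & e4 & _).
  rewrite vcod_f in c2, c3.
  assert (frame_eta : framed eta J (hunit M) d l) by (repeat split; auto).
  assert (frame_gamma : framed gamma JR J (vid A) f) by (repeat split; auto).
  assert (frame_c : framed c F (hunit B) (vid B) f) by (repeat split; auto).
  assert (hs_JR : hs JR = A) by (rewrite <- g1, <- bnd_tl, g3; apply vdom_id).
  assert (ht_JR : ht JR = C) by (rewrite <- g1, <- bnd_tr, g4; auto).
  assert (hs_F : hs F = B) by (rewrite <- c1, <- bnd_tl, c3; apply vdom_id).
  assert (ht_F : ht F = C) by (rewrite <- c1, <- bnd_tr, c4; auto).
  destruct (conjoint_unit _ _ _ _ _ c vdom_f vcod_f frame_c cart_c) as (u & frame_u & u_c).
  destruct (restriction_comparison _ _ _ _ _ _ _ _ _ _ _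
              hs_J ht_J hs_F vdom_l vdom_f vcod_f frame_gamma frame_c cart_gamma)
    as (th & frame_th & th_gamma).
  exact (pw_lan_restriction _ _ _ _ _ _ _ _ _ _ _ _ _ _
           hs_J ht_J hs_JR ht_JR hs_F ht_F vdom_d vdom_l vcod_l vdom_f vcod_f
           frame_eta frame_gamma frame_c cart_gamma u th frame_u u_c frame_th th_gamma lan_eta).
Qed.
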